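(* Let $N_r\ge N_t\ge 2$, let $\mathbf{H}\in\mathbb{C}^{N_r\times N_t}$ have full column rank, let $\mathbf{H}=\mathbf{Q}\mathbf{L}$ be its thin QL decomposition, and let $\mathcal{X}\subset\mathbb{C}$ be a finite constellation. Fix $1\le\nu\le N_t-1$ and partition $$\mathbf{L}=\begin{bmatrix}\mathbf{P}&\mathbf{0}\\ \mathbf{R}&\mathbf{S}\end{bmatrix},$$ with $\mathbf{P}\in\mathbb{C}^{\nu\times\nu}$ and $\mathbf{S}\in\mathbb{C}^{(N_t-\nu)\times(N_t-\nu)}$. Define $$\boldsymbol{\Sigma}=\operatorname{diag}(\mathbf{S}^{-1}\mathbf{S}^{-\dagger})^{-1/2},\qquad \mathbf{W}_{\mathrm p}=\begin{bmatrix}\mathbf{I}_\nu&\mathbf{0}\\ \mathbf{0}&\boldsymbol{\Sigma}\mathbf{S}^{-1}\end{bmatrix}.$$ For $\mathbf{y}\in\mathbb{C}^{N_r}$ let $\tilde{\mathbf{y}}=\mathbf{Q}^\dagger\mathbf{y}$, and define $$\mathbf{x}_{\mathrm{ML}}=\arg\min_{\mathbf{x}\in\mathcal{X}^{N_t}}\|\tilde{\mathbf{y}}-\mathbf{L}\mathbf{x}\|,\qquad \mathbf{x}_{\mathrm{WLD}}=\arg\min_{\mathbf{x}\in\mathcal{X}^{N_t}}\|\mathbf{W}_{\mathrm p}(\tilde{\mathbf{y}}-\mathbf{L}\mathbf{x})\|.$$ Then $$\|\tilde{\mathbf{y}}-\mathbf{L}\mathbf{x}_{\mathrm{ML}}\|\le\|\tilde{\mathbf{y}}-\mathbf{L}\mathbf{x}_{\mathrm{WLD}}\|\le\kappa(\mathbf{W}_{\mathrm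 p})\,\|\tilde{\mathbf{y}}-\mathbf{L}\mathbf{x}_{\mathrm{ML}}\|$$ and $$\|\mathbf{W}_{\mathrm p}(\tilde{\mathbf{y}}-\mathbf{L}\mathbf{x}_{\mathrm{WLD}})\|\le\sigma_{\max}(\mathbf{W}_{\mathrm p})\,\|\tilde{\mathbf{y}}-\mathbf{L}\mathbf{x}_{\mathrm{ML}}\|,$$ where $\kappa(\mathbf{W}_{\mathrm p})=\sigma_{\max}(\mathbf{W}_{\mathrm p})/\sigma_{\min}(\mathbf{W}_{\mathrm p})$, and $\sigma_{\max}(\mathbf{W}_{\mathrm p}),\sigma_{\min}(\mathbf{W}_{\mathrm p})$ are the largest and smallest singular values of $\mathbf{W}_{\mathrm p}$.
   Context: The thin QL decomposition $\mathbf{H}=\mathbf{Q}\mathbf{L}$ means that $\mathbf{Q}\in\mathbb{C}^{N_r\times N_t}$ has orthonormal columns and $\mathbf{L}\in\mathbb{C}^{N_t\times N_t}$ is lower triangular with real positive diagonal entries. For a square matrix $\mathbf{A}$, $\operatorname{diag}(\mathbf{A})$ denotes the diagonal matrix having the same diagonal entries as $\mathbf{A}$. The superscript $\dagger$ denotes conjugate transpose, and $\|\cdot\|$ is the Euclidean norm. The argmins denote any minimizer. *)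

(* Complex scalars: an arbitrary numClosedFieldType C
   (e.g. complex numbers R[i] for R : realType). *)
From HB Require Import structures.
From mathcomp Require Import all_boot all_order all_algebra.
Set Implicit Arguments. Unset Strict Implicit. Unset Printing Implicit Defensive.
Import Order.TTheory GRing.Theory Num.Theory.
Local Open Scope ring_scope.

Section Defs.
Variable C : numClosedFieldType.

Definition ctmx m n (A : 'M[C]_(m, n)) : 'M[C]_(n, m) := (map_mx Num.conj A)^T.

Definition vnorm n (v : 'cV[C]_n) : C := sqrtC (\sum_i `|v i 0| ^+ 2).

Definition lower_tri_pos n (L : 'M[C]_n) : Prop :=
  (forall i j : 'I_n, (i < j)%N -> L i j = 0) /\ (forall i, 0 < L i i).

Definition thin_QL m n (H : 'M[C]_(m, n)) (Q : 'M[C]_(m, n)) (L : 'M[C]_n) : Prop :=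
  ctmx Q *m Q = 1%:M /\ lower_tri_pos L /\ H = Q *m L.

Definition singular_value n (A : 'M[C]_n) (s : C) : Prop :=
  0 <= s /\ eigenvalue (ctmx A *m A) (s ^+ 2).

Definition is_sigma_max n (A : 'M[C]_n) (s : C) : Prop :=
  singular_value A s /\ forall t, singular_value A t -> t <= s.

Definition is_sigma_min n (A : 'M[C]_n) (s : C) : Prop :=
  singular_value A s /\ forall t, singular_value A t -> s <= t.

Definition Sigma_of n (S : 'M[C]_n) : 'M[C]_n :=
  let M := invmx S *m ctmx (invmx S) in
  diag_mx (\row_i (sqrtC (M i i))^-1).

Definition Wp_of n1 n2 (S : 'M[C]_n2) : 'M[C]_(n1 + n2) :=
  block_mx 1%:M 0 0 (Sigma_of S *m invmx S).

Definition in_const n (X : seq C) (x : 'cV[C]_n) : Prop := forall i, x i 0 \in X.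

End Defs.

(* Diagonalising the normal matrix W^dagger W = P^dagger D P with P unitary
   gives |W v|^2 = sum_i d_i |(P v)_i|^2 and |v|^2 = sum_i |(P v)_i|^2, where
   each d_i is the square of a singular value of W; hence
   smin |v| <= |W v| <= smax |v|.  Moreover smin > 0 because W_p is
   invertible: S is triangular with positive diagonal, and the diagonal
   entries of Sigma are inverse norms of the nonzero rows of S^-1.  Chaining
   these bounds with the two minimality properties gives
   smin |r_WLD| <= |W r_WLD| <= |W r_ML| <= smax |r_ML|. *)

From mathcomp Require Import all_boot all_order all_algebra.
From mathcomp Require Import sesquilinear spectral.
Import Order.TTheory GRing.Theory Num.Theory.
Set Implicit Arguments. Unset Strict Implicit. Unset Printing Implicit Defensive.
Local Open Scope ring_scope.

Section SingularValueBounds.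
Variable C : numClosedFieldType.

Lemma ctmxE m n (A : 'M[C]_(m, n)) : ctmx A = (A ^t*)%sesqui.
Proof. by rewrite /ctmx map_trmx. Qed.

Lemma ctmx_mul m n p (A : 'M[C]_(m, n)) (B : 'M[C]_(n, p)) :
  ctmx (A *m B) = ctmx B *m ctmx A.
Proof. by rewrite /ctmx map_mxM trmx_mul. Qed.

Lemma ctmxK m n (A : 'M[C]_(m, n)) : ctmx (ctmx A) = A.
Proof. by rewrite !ctmxE trmxCK. Qed.

Lemma unitary_ctmxK n (P : 'M[C]_n) : P \is unitarymx -> ctmx P *m P = 1%:M.
Proof. by move=> Pu; rewrite ctmxE -(invmx_unitary Pu) mulVmx ?unitarymx_unit. Qed.

Lemma row_unit_neq0 n (A : 'M[C]_n) i : A \in unitmx -> row i A != 0.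
Proof.
move=> Au; apply/eqP => Ai0.
have : row i (A *m invmx A) = 0 by rewrite row_mul Ai0 mul0mx.
by rewrite mulmxV // => /rowP /(_ i); rewrite !mxE eqxx; apply/eqP; rewrite oner_eq0.
Qed.

Definition sqnorm n (v : 'cV[C]_n) : C := \sum_i `|v i 0| ^+ 2.

Lemma vnormE n (v : 'cV[C]_n) : vnorm v = sqrtC (sqnorm v).
Proof. by []. Qed.

Lemma sqnorm_ge0 n (v : 'cV[C]_n) : 0 <= sqnorm v.
Proof. by apply: sumr_ge0 => i _; rewrite exprn_ge0. Qed.

Lemma sqnorm_eq0 n (v : 'cV[C]_n) : (sqnorm v == 0) = (v == 0).
Proof.
apply/eqP/eqP => [v0|->]; last by apply: big1 => i _; rewrite mxE normr0 expr0n.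
apply/matrixP => i j; rewrite ord1 mxE; apply/eqP.
rewrite -normr_eq0 -sqrf_eq0; apply/eqP.
by move: v0 => /psumr_eq0P; apply=> // k _; rewrite exprn_ge0.
Qed.

Lemma sqnormE n (v : 'cV[C]_n) : sqnorm v = (ctmx v *m v) 0 0.
Proof. by rewrite mxE; apply: eq_bigr => i _; rewrite !mxE normCKC. Qed.

Lemma sqnorm_unitary n (P : 'M[C]_n) (v : 'cV[C]_n) :
  P \is unitarymx -> sqnorm (P *m v) = sqnorm v.
Proof.
by move=> Pu; rewrite !sqnormE ctmx_mul mulmxA -(mulmxA _ _ P) unitary_ctmxK // mulmx1.
Qed.

Lemma mulmx_ctmx_diagE m n (A : 'M[C]_(m, n)) i :
  (A *m ctmx A) i i = sqnorm (ctmx (row i A)).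
Proof. by rewrite mxE; apply: eq_bigr => j _; rewrite !mxE norm_conjC normCK. Qed.

Lemma ctmx_eq0 m n (A : 'M[C]_(m, n)) : (ctmx A == 0) = (A == 0).
Proof.
apply/eqP/eqP => [A0|->]; last by rewrite /ctmx map_mx0 trmx0.
by rewrite -(ctmxK A) A0 /ctmx map_mx0 trmx0.
Qed.

Lemma gram_normalmx n (W : 'M[C]_n) : ctmx W *m W \is normalmx.
Proof. by apply/normalmxP; rewrite -ctmxE ctmx_mul ctmxK. Qed.

Lemma spectral_diag_eigenvalue n (A : 'M[C]_n) i :
  A \is normalmx -> eigenvalue A (spectral_diag A 0 i).
Proof.
move=> /orthomx_spectralP AE; set P := spectralmx A in AE *.
set d := spectral_diag A in AE *.
apply/eigenvalueP; exists (row i P); last exact/row_unit_neq0/spectral_unit.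
rewrite -row_mul AE !mulmxA mulmxV ?spectral_unit // mul1mx mul_diag_mx.
by apply/rowP => j; rewrite !mxE.
Qed.

Lemma normalmx_quadraticE n (A : 'M[C]_n) (v : 'cV[C]_n) : A \is normalmx ->
  (ctmx v *m A *m v) 0 0
  = \sum_i spectral_diag A 0 i * `|(spectralmx A *m v) i 0| ^+ 2.
Proof.
move=> /orthomx_spectralP AE; set P := spectralmx A in AE *.
set d := spectral_diag A in AE *.
rewrite AE invmx_unitary ?spectral_unitarymx // -ctmxE.
have -> : ctmx v *m (ctmx P *m diag_mx d *m P) *m v
          = ctmx (P *m v) *m diag_mx d *m (P *m v) by rewrite ctmx_mul !mulmxA.
rewrite mul_mx_diag mxE; apply: eq_bigr => i _.
by rewrite !mxE normCKC mulrAC mulrC.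
Qed.

(* [eigenvalue] is stated with row eigenvectors [u], hence the column [ctmx u]. *)
Lemma gram_eigenvectorE n (W : 'M[C]_n) (u : 'rV[C]_n) a :
  u *m (ctmx W *m W) = a *: u -> a * sqnorm (ctmx u) = sqnorm (W *m ctmx u).
Proof.
move=> uE; rewrite !sqnormE ctmx_mul ctmxK mulmxA -(mulmxA u) uE.
by rewrite -scalemxAl !mxE.
Qed.

Lemma gram_eigenvalue_ge0 n (W : 'M[C]_n) a : eigenvalue (ctmx W *m W) a -> 0 <= a.
Proof.
case/eigenvalueP => u /gram_eigenvectorE uE u0.
have u_gt0 : 0 < sqnorm (ctmx u) by rewrite lt_def sqnorm_eq0 ctmx_eq0 u0 sqnorm_ge0.
by rewrite -(pmulr_lge0 _ u_gt0) uE sqnorm_ge0.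
Qed.

Lemma singular_value_spectral n (W : 'M[C]_n) i :
  singular_value W (sqrtC (spectral_diag (ctmx W *m W) 0 i)).
Proof.
have eig := spectral_diag_eigenvalue i (gram_normalmx W).
by split; [rewrite sqrtC_ge0; apply: gram_eigenvalue_ge0 eig | rewrite sqrtCK].
Qed.

Lemma sqnorm_mulmxE n (W : 'M[C]_n) (v : 'cV[C]_n) :
  let B := ctmx W *m W in
  sqnorm (W *m v) = \sum_i spectral_diag B 0 i * `|(spectralmx B *m v) i 0| ^+ 2.
Proof.
by rewrite sqnormE ctmx_mul mulmxA -(mulmxA _ _ W) normalmx_quadraticE ?gram_normalmx.
Qed.

Lemma sqnorm_mulmx_le n (W : 'M[C]_n) s (v : 'cV[C]_n) :
  is_sigma_max W s -> sqnorm (W *m v) <= s ^+ 2 * sqnorm v.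
Proof.
move=> [[s_ge0 _] s_max]; set B := ctmx W *m W.
rewrite sqnorm_mulmxE -(sqnorm_unitary v (spectral_unitarymx B)) mulr_sumr.
apply: ler_sum => i _; apply: ler_wpM2r; first exact: exprn_ge0.
have [t_ge0 _] := singular_value_spectral W i.
rewrite -[leLHS]sqrtCK lerXn2r ?nnegrE //; exact/s_max/singular_value_spectral.
Qed.

Lemma sqnorm_mulmx_ge n (W : 'M[C]_n) s (v : 'cV[C]_n) :
  is_sigma_min W s -> s ^+ 2 * sqnorm v <= sqnorm (W *m v).
Proof.
move=> [[s_ge0 _] s_min]; set B := ctmx W *m W.
rewrite sqnorm_mulmxE -(sqnorm_unitary v (spectral_unitarymx B)) mulr_sumr.
apply: ler_sum => i _; apply: ler_wpM2r; first exact: exprn_ge0.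
have [t_ge0 _] := singular_value_spectral W i.
rewrite -[leRHS]sqrtCK lerXn2r ?nnegrE //; exact/s_min/singular_value_spectral.
Qed.

Lemma vnorm_mulmx_le n (W : 'M[C]_n) s (v : 'cV[C]_n) :
  is_sigma_max W s -> vnorm (W *m v) <= s * vnorm v.
Proof.
move=> s_max; have [[s_ge0 _] _] := s_max.
rewrite !vnormE -(sqrCK s_ge0) -sqrtCM ?nnegrE ?exprn_ge0 ?sqnorm_ge0 //.
by rewrite ler_sqrtC ?nnegrE ?mulr_ge0 ?exprn_ge0 ?sqnorm_ge0 ?sqnorm_mulmx_le.
Qed.

Lemma vnorm_mulmx_ge n (W : 'M[C]_n) s (v : 'cV[C]_n) :
  is_sigma_min W s -> s * vnorm v <= vnorm (W *m v).
Proof.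
move=> s_min; have [[s_ge0 _] _] := s_min.
rewrite !vnormE -(sqrCK s_ge0) -sqrtCM ?nnegrE ?exprn_ge0 ?sqnorm_ge0 //.
by rewrite ler_sqrtC ?nnegrE ?mulr_ge0 ?exprn_ge0 ?sqnorm_ge0 ?sqnorm_mulmx_ge.
Qed.

Lemma sigma_min_gt0 n (W : 'M[C]_n) s : W \in unitmx -> is_sigma_min W s -> 0 < s.
Proof.
move=> Wu [[s_ge0 /eigenvalueP [u /gram_eigenvectorE uE u0]] _].
rewrite lt_def s_ge0 andbT; apply: contraNneq u0 => s0.
move: uE; rewrite s0 expr0n mul0r => /esym/eqP; rewrite sqnorm_eq0 => /eqP Wu0.
by rewrite -ctmx_eq0 -(mulKmx Wu (ctmx u)) Wu0 mulmx0.
Qed.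

Lemma lower_tri_pos_drsubmx n1 n2 (L : 'M[C]_(n1 + n2)) :
  lower_tri_pos L -> lower_tri_pos (drsubmx L).
Proof.
move=> [L_up L_diag]; split=> [i j ij|i]; rewrite !mxE //.
by apply: L_up; rewrite /= ltn_add2l.
Qed.

Lemma lower_tri_pos_unit n (L : 'M[C]_n) : lower_tri_pos L -> L \in unitmx.
Proof.
move=> [L_up L_diag]; rewrite unitmxE det_trig; last exact/is_trig_mxP.
by rewrite unitfE; apply/lt0r_neq0/prodr_gt0.
Qed.

Lemma Sigma_of_unit n (S : 'M[C]_n) : S \in unitmx -> Sigma_of S \in unitmx.
Proof.
move=> Su; rewrite unitmxE det_diag unitfE; apply/prodf_neq0 => i _.
rewrite mxE invr_eq0 sqrtC_eq0 mulmx_ctmx_diagE sqnorm_eq0 ctmx_eq0.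
by apply: row_unit_neq0; rewrite unitmx_inv.
Qed.

Lemma Wp_of_unit n1 n2 (S : 'M[C]_n2) : S \in unitmx -> Wp_of n1 S \in unitmx.
Proof.
move=> Su; rewrite unitmxE det_lblock det1 mul1r -unitmxE.
by rewrite unitmx_mul unitmx_inv Su Sigma_of_unit.
Qed.

End SingularValueBounds.

Lemma weighted_argmin_bounds (C : numClosedFieldType) (T : Type) (P : T -> Prop) n
    (W : 'M[C]_n) (r : T -> 'cV[C]_n) (x0 x1 : T) (smax smin : C) :
  W \in unitmx -> is_sigma_max W smax -> is_sigma_min W smin ->
  P x0 -> (forall x, P x -> vnorm (r x0) <= vnorm (r x)) ->
  P x1 -> (forall x, P x -> vnorm (W *m r x1) <= vnorm (W *m r x)) ->
  vnorm (r x0) <= vnorm (r x1) /\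
  vnorm (r x1) <= (smax / smin) * vnorm (r x0) /\
  vnorm (W *m r x1) <= smax * vnorm (r x0).
Proof.
move=> Wu smax_W smin_W Px0 x0_min Px1 x1_min.
have weighted_le : vnorm (W *m r x1) <= smax * vnorm (r x0).
  exact: le_trans (x1_min _ Px0) (vnorm_mulmx_le _ smax_W).
split; first exact: x0_min.
split=> //; rewrite mulrAC ler_pdivlMr ?(sigma_min_gt0 Wu smin_W) // mulrC.
exact: le_trans (vnorm_mulmx_ge _ smin_W) weighted_le.
Qed.

Theorem lemma1 (C : numClosedFieldType) (Nr n1 n2 : nat)
  (hn1 : (1 <= n1)%N) (hn2 : (1 <= n2)%N) (hNr : (n1 + n2 <= Nr)%N)
  (H : 'M[C]_(Nr, n1 + n2)) (hrank : \rank H = (n1 + n2)%N)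
  (Q : 'M[C]_(Nr, n1 + n2)) (L : 'M[C]_(n1 + n2)) (hQL : thin_QL H Q L)
  (X : seq C) (y : 'cV[C]_Nr)
  (xML xWLD : 'cV[C]_(n1 + n2)) (smax smin : C) :
  let S := drsubmx L in
  let Wp := Wp_of n1 S in
  let yt := ctmx Q *m y in
  in_const X xML ->
  (forall x, in_const X x -> vnorm (yt - L *m xML) <= vnorm (yt - L *m x)) ->
  in_const X xWLD ->
  (forall x, in_const X x ->
     vnorm (Wp *m (yt - L *m xWLD)) <= vnorm (Wp *m (yt - L *m x))) ->
  is_sigma_max Wp smax -> is_sigma_min Wp smin ->
  vnorm (yt - L *m xML) <= vnorm (yt - L *m xWLD) /\
  vnorm (yt - L *m xWLD) <= (smax / smin) * vnorm (yt - L *m xML) /\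
  vnorm (Wp *m (yt - L *m xWLD)) <= smax * vnorm (yt - L *m xML).
Proof.
move=> S Wp yt xML_in xML_min xWLD_in xWLD_min smax_Wp smin_Wp.
have [_ [L_tri _]] := hQL.
have Wp_unit : Wp \in unitmx.
  exact/Wp_of_unit/lower_tri_pos_unit/lower_tri_pos_drsubmx.
exact: (weighted_argmin_bounds (r := fun x => yt - L *m x)
          Wp_unit smax_Wp smin_Wp xML_in xML_min xWLD_in xWLD_min).
Qed.
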